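(* Let $\mathcal{L}$ be a constraint language, $\mathcal{R}(\mathcal{L})$ a relational extension of it with set of relation symbols $\mathcal{R}$, and $\mathcal{P}_F$ a quantitative definite clause specification in $\mathcal{R}(\mathcal{L})$. Let $\langle \mathcal{A}_0, \mathcal{A}_1, \mathcal{A}_2, \ldots\rangle$ be a $\mathcal{P}_F$-chain (of $\mathcal{R}(\mathcal{L})$-interpretations extending some $\mathcal{L}$-interpretation $\mathcal{I}$). Then for each $n$-ary relation symbol $r\in\mathcal{R}$, each variable assignment $\alpha\in\mathsf{ASS}$ and each $\vec{x}\in\mathsf{VAR}^n$, there exists some $m\in\mathbb{N}$ such that $$\mu\big(\alpha(\vec{x});\, r^{\bigcup_{i\ge 0}\mathcal{A}_i}\big)=\mu\big(\alpha(\vec{x});\, r^{\mathcal{A}_m}\big).$$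
   Context: A constraint language $\mathcal{L}$ consists of: a signature; a decidable infinite set $\mathsf{VAR}$ of variables; a decidable set of $\mathcal{L}$-constraints; a computable function $\mathsf{V}$ assigning to each constraint $\phi$ a finite set $\mathsf{V}(\phi)$ of variables; a nonempty set of $\mathcal{L}$-interpretations, each $\mathcal{I}$ having a nonempty domain $\mathcal{D}$ and set $\mathsf{ASS}$ of variable assignments $\mathsf{VAR}\to\mathcal{D}$; and for each interpretation $\mathcal{I}$ a map sending each constraint $\phi$ to a set $[\![\phi]\!]^{\mathcal{I}}\subseteq\mathsf{ASS}$ (its solutions), such that if $\alpha\in[\![\phi]\!]^{\mathcal{I}}$ and $\beta$ agrees with $\alpha$ on $\mathsf{V}(\phi)$ then $\beta\in[\![\phi]\!]^{\mathcal{I}}$. The extension $\mathcal{R}(\mathcal{L})$ adds a decidable set $\mathcal{R}$ of relation symbols with arities; an atom is $r(\vec{x})$ with $r\in\mathcal{R}$ of arity $n$ and $\vec{x}$ an $n$-tuple of pairwise distinct variables. A quantitative definite clause specification $\mathcal{P}_F$ in $\mathcal{R}(\mathcal{L})$ is a finite set of quantitative definite clauses $r(\vec{x})\leftarrow_f \phi \,\&\, q_1(\vec{x}_1)\,\&\,\ldots\,\&\, q_k(\vec{x}_k)$, where $r(\vec x),q_j(\vec x_j)$ are atoms, $\phi$ is an $\mathcal{L}$-constraint, $k\ge 0$ and $f\in(0,1]$ (the factor). An $\mathcal{R}(\mathcal{L})$-interpretation $\mathcal{A}$ extending an $\mathcal{L}$-interpretation $\mathcal{I}$ has the same domain $\mathcal{D}$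 and assigns to each $n$-ary $r\in\mathcal{R}$ a fuzzy subset of $\mathcal{D}^n$, i.e. a total membership function $\mu(\_\,; r^{\mathcal{A}}):\mathcal{D}^n\to[0,1]$; for $\mathcal{L}$-constraints $[\![\phi]\!]^{\mathcal{A}}=[\![\phi]\!]^{\mathcal{I}}$. Interpretations extending the same $\mathcal{I}$ are base equivalent. For a set $X$ of base equivalent interpretations, $\bigcup X$ is the interpretation with $\mu(\alpha(\vec x); r^{\bigcup X})=\sup\{\mu(\alpha(\vec x); r^{\mathcal{A}'})\mid \mathcal{A}'\in X\}$ for all $r,\alpha,\vec x$ (with $\sup\emptyset=0$). A renaming is a bijection $\mathsf{VAR}\to\mathsf{VAR}$ that is the identity except at finitely many variables; a variant of a clause is the clause obtained by simultaneously replacing each variable $X$ by $\rho(X)$ for some renaming $\rho$. Given $\mathcal{P}_F$ and an $\mathcal{L}$-interpretation $\mathcal{I}$, a sequence $\langle\mathcal{A}_0,\mathcal{A}_1,\ldots\rangle$ of $\mathcal{R}(\mathcal{L})$-interpretations extending $\mathcal{I}$ is a $\mathcal{P}_F$-chain iff for every $n$-ary $r\in\mathcal{R}$, $\alpha\in\mathsf{ASS}$, $\vec{x}\in\mathsf{VAR}^n$: $\mu(\alpha(\vec x); r^{\mathcal{A}_0})=0$ and $\mu(\alpha(\vec x); r^{\mathcal{A}_{i+1}})=\max\{ f\times\min\{\mu(\alpha(\vec x_j); q_j^{\mathcal{A}_i})\mid 1\le j\le k\} \mid r(\vec x)\leftarrow_f\phi\,\&\,q_1(\vec x_1)\,\&\ldots\&\,q_k(\vec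 x_k)$ is a variant of a clause in $\mathcal{P}_F$ and $\alpha\in[\![\phi]\!]^{\mathcal{A}_i}\}$, with $\min\emptyset=1$ (and the maximum over an empty set taken as $0$). *)

From Stdlib Require List.
From HB Require Import structures.
From mathcomp Require Import all_boot all_order all_algebra.
From mathcomp Require Import boolp classical_sets reals.
Set Implicit Arguments. Unset Strict Implicit. Unset Printing Implicit Defensive.
Import Order.TTheory GRing.Theory Num.Theory.
Local Open Scope ring_scope.
Local Open Scope classical_set_scope.

Section QDC.
Variables (R : realType) (VAR : eqType) (Constr : Type) (Rel : Type)
          (arity : Rel -> nat).

Definition atom := {r : Rel & (arity r).-tuple VAR}.
Definition is_atom (a : atom) : bool := uniq (tagged a).

(* A quantitative definite clause  r(x) <-_f phi & q_1(x_1) & ... & q_k(x_k). *)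
Record qclause := QClause {
  hd_rel : Rel;
  hd_args : (arity hd_rel).-tuple VAR;
  cl_constr : Constr;
  cl_factor : R;
  cl_body : seq atom }.

Definition wf_qclause (c : qclause) : Prop :=
  [/\ uniq (hd_args c), 0 < cl_factor c <= 1 & all is_atom (cl_body c)].

Definition qdc_spec (P : seq qclause) : Prop := forall c, List.In c P -> wf_qclause c.

Definition renaming (rho : VAR -> VAR) : Prop :=
  bijective rho /\ exists s : seq VAR, forall v, v \notin s -> rho v = v.

(* the variant of a clause under a renaming; [crename] is the (simultaneous)
   variable renaming on L-constraints *)
Definition rename_atom (rho : VAR -> VAR) (a : atom) : atom :=
  Tagged (fun r => (arity r).-tuple VAR) (map_tuple rho (tagged a)).

Definition rename_clause (crename : (VAR -> VAR) -> Constr -> Constr)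
  (rho : VAR -> VAR) (c : qclause) : qclause :=
  @QClause (hd_rel c) (map_tuple rho (hd_args c)) (crename rho (cl_constr c))
    (cl_factor c) [seq rename_atom rho a | a <- cl_body c].

(* Membership functions of an R(L)-interpretation over domain D. *)
Definition interp (D : Type) := forall r : Rel, (arity r).-tuple D -> R.

Definition fuzzy_interp (D : Type) (A : interp D) : Prop :=
  forall r d, 0 <= A r d <= 1.

(* min over a list, with min of the empty list = 1 *)
Definition lmin (s : seq R) : R := foldr Num.min 1 s.

Definition body_val (D : Type) (A : interp D) (alpha : VAR -> D) (b : seq atom) : R :=
  lmin [seq A (tag a) (map_tuple alpha (tagged a)) | a <- b].

(* the set whose maximum defines mu(alpha(x); r^{A_{i+1}}) *)
Definition step_vals (D : Type) (P : seq qclause)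
  (crename : (VAR -> VAR) -> Constr -> Constr)
  (sem : Constr -> (VAR -> D) -> Prop)
  (A : interp D) (r : Rel) (alpha : VAR -> D) (x : (arity r).-tuple VAR) : set R :=
  [set v | exists c rho, List.In c P /\ renaming rho /\
     let c' := rename_clause crename rho c in
     [/\ hd_rel c' = r, val (hd_args c') = val x, sem (cl_constr c') alpha
       & v = cl_factor c' * body_val A alpha (cl_body c')]].

(* v is the maximum of S, with the maximum of the empty set taken as 0 *)
Definition is_max (S : set R) (v : R) : Prop :=
  (S = set0 /\ v = 0) \/ (S v /\ forall w, S w -> w <= v).

(* P_F-chain (all A_i extend the same L-interpretation: same domain D and
   same constraint semantics [sem]) *)
Definition is_chain (D : Type) (P : seq qclause)
  (crename : (VAR -> VAR) -> Constr -> Constr)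
  (sem : Constr -> (VAR -> D) -> Prop) (A : nat -> interp D) : Prop :=
  (forall r (alpha : VAR -> D) (x : (arity r).-tuple VAR),
      A 0%N r (map_tuple alpha x) = 0) /\
  (forall i r (alpha : VAR -> D) (x : (arity r).-tuple VAR), uniq x ->
      is_max (step_vals P crename sem (A i) alpha x)
             (A i.+1 r (map_tuple alpha x))).

Definition union_interp (D : Type) (A : nat -> interp D) : interp D :=
  fun r d => sup [set A i r d | i in [set: nat]].

End QDC.

Arguments union_interp [R Rel arity D] A r d.

(* Every membership degree occurring in the chain is either 0 or a product of
   clause factors lying in (0,1): A_0 is 0, and a value of A_(i+1) is a factor
   times a minimum of values of A_i (a factor 1 can be dropped from a product).
   Let q < 1 be the largest such factor. If some A_i(d) equals s > 0, a product
   that is at least s has fewer than N factors, where q^N < s; there are only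
   finitely many such products, so the values at least s have a maximum, which is
   the supremum. If all the values are 0, any index works. *)

From HB Require Import structures.
From mathcomp Require Import all_boot all_order all_algebra.
From mathcomp Require Import boolp classical_sets reals.
From mathcomp Require Import lra.
Import Order.TTheory GRing.Theory Num.Theory.
Local Open Scope ring_scope.
Local Open Scope classical_set_scope.

Set Implicit Arguments.
Unset Strict Implicit.

Section MaxOfFinitelyMany.
Context {d : Order.disp_t} {T : orderType d}.

Lemma exists_max_of_finite_above (S : set T) (s : T) (L : seq T) :
  S s -> (forall w, S w -> (s <= w)%O -> w \in L) -> exists2 m, S m & ubound S m.
Proof.
move=> Ss above_in_L.
pose m := \big[Order.max/s]_(w <- [seq w <- L | `[< S w >]]) w.
have s_le_m : (s <= m)%O by exact: bigmax_ge_id.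
exists m.
  rewrite /m big_seq; elim/big_ind: _ => // [u v Su Sv|w].
    by rewrite maxEle; case: ifP.
  by rewrite mem_filter => /andP[/asboolP].
move=> w Sw; have [s_le_w|w_lt_s] := leP s w; last exact: le_trans (ltW w_lt_s) s_le_m.
apply: le_bigmax_seq => //; rewrite mem_filter above_in_L // andbT; exact/asboolP.
Qed.

End MaxOfFinitelyMany.

Section Products.
Variable R : realType.
Implicit Types (fs l : seq R) (q s v w : R).

Lemma exprn_bernoulli_le1 q n : 0 <= q <= 1 -> q ^+ n * (1 + n%:R * (1 - q)) <= 1.
Proof.
case/andP=> q_ge0 q_le1; elim: n => [|n IH]; first by rewrite mul0r addr0 mulr1.
have qqn_le1 : q * q ^+ n <= 1 by rewrite -exprS exprn_ile1.
have /(ler_wpM2l q_ge0) : q ^+ n * (1 + n%:R * (1 - q)) <= 1 := IH.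
have : (1 - q) * (q * q ^+ n) <= 1 - q by rewrite ler_piMr ?subr_ge0.
rewrite exprS -nat1r; nra.
Qed.

Lemma expr_eventually_lt q s : 0 <= q < 1 -> 0 < s ->
  exists N, forall n, (N <= n)%N -> q ^+ n < s.
Proof.
case/andP=> q_ge0 q_lt1 s_gt0.
have q'_gt0 : 0 < 1 - q by rewrite subr_gt0.
exists (Num.bound (s^-1 / (1 - q))) => n le_Nn.
have : s^-1 / (1 - q) < n%:R.
  apply: lt_le_trans (archi_boundP _) _; first by rewrite divr_ge0 ?invr_ge0 ?ltW.
  by rewrite ler_nat.
rewrite ltr_pdivrMr // -(ltr_pM2l s_gt0) mulrA mulfV ?gt_eqF // => lt_1.
have bern : q ^+ n * (1 + n%:R * (1 - q)) <= 1.
  by apply: exprn_bernoulli_le1; rewrite q_ge0 ltW.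
have qn_ge0 : 0 <= q ^+ n by exact: exprn_ge0.
have k_ge0 : 0 <= n%:R * (1 - q) by rewrite mulr_ge0 // ltW.
nra.
Qed.

Definition products fs : set R :=
  [set v | v = 0 \/ exists2 l, all (mem fs) l & v = \prod_(f <- l) f].

Lemma products1 fs : products fs 1.
Proof. by right; exists [::]; rewrite ?big_nil. Qed.

Lemma productsM fs f v : products fs v -> f \in fs -> products fs (f * v).
Proof.
move=> [->|[l l_fs ->]] fs_f; first by left; rewrite mulr0.
by right; exists (f :: l); rewrite ?big_cons //= fs_f.
Qed.

Lemma products_ge0 fs v : {in fs, forall f, 0 <= f} -> products fs v -> 0 <= v.
Proof.
move=> fs_ge0 [->//|[l l_fs ->]].
by rewrite big_seq prodr_ge0 // => f /(allP l_fs) /fs_ge0.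
Qed.

Lemma products_lmin fs (T : Type) (F : T -> R) (b : seq T) :
  (forall a, products fs (F a)) -> products fs (lmin (map F b)).
Proof.
move=> F_prod; elim: b => [|a b IH]; first exact: products1.
by rewrite /lmin /= minEle; case: ifP.
Qed.

Fixpoint short_products fs N : seq R :=
  if N is N'.+1 then 1 :: [seq f * v | f <- fs, v <- short_products fs N'] else [:: 1].

Lemma mem_short_products fs N l :
  all (mem fs) l -> (size l <= N)%N -> \prod_(f <- l) f \in short_products fs N.
Proof.
elim: N l => [|N IH] [|f l] //=; rewrite ?big_nil ?mem_head // big_cons.
by case/andP=> fs_f l_fs le_lN; rewrite inE allpairs_f ?orbT ?IH.
Qed.

Lemma prod_le_expr q l : {in l, forall f, 0 <= f <= q} -> \prod_(f <- l) f <= q ^+ size l.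
Proof.
elim: l => [|f l IH] l_bnd; first by rewrite big_nil.
have /andP[f_ge0 f_le_q] := l_bnd f (mem_head _ _).
have l_bnd' : {in l, forall g, 0 <= g <= q}.
  by move=> g l_g; apply: l_bnd; rewrite inE l_g orbT.
rewrite big_cons exprS ler_pM ?IH //.
by rewrite big_seq prodr_ge0 // => g /l_bnd' /andP[].
Qed.

Lemma products_has_max fs (S : set R) : {in fs, forall f, 0 <= f < 1} ->
  S !=set0 -> S `<=` products fs -> exists2 m, S m & ubound S m.
Proof.
move=> fs01 [v0 Sv0] S_prod.
have fs_ge0 : {in fs, forall f, 0 <= f} by move=> f /fs01 /andP[].
have [[s [Ss s_gt0]]|S_npos] := pselect (exists s, S s /\ 0 < s); last first.
  exists v0 => // w Sw; apply: le_trans (products_ge0 fs_ge0 (S_prod _ Sv0)).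
  by rewrite leNgt; apply/negP => w_gt0; apply: S_npos; exists w.
pose q := \big[Order.max/0]_(f <- fs) f.
have fs_le_q : {in fs, forall f, 0 <= f <= q}.
  by move=> f fs_f; rewrite fs_ge0 //= le_bigmax_seq.
have q01 : 0 <= q < 1.
  by rewrite bigmax_ge_id /q big_seq bigmax_lt // => f /fs01 /andP[].
have [N qN_lt_s] := expr_eventually_lt q01 s_gt0.
apply: (exists_max_of_finite_above (L := short_products fs N) Ss) => w Sw le_sw.
have [w0|[l l_fs w_prod]] := S_prod w Sw.
  by have := lt_le_trans s_gt0 le_sw; rewrite w0 ltxx.
have prod_le : \prod_(f <- l) f <= q ^+ size l.
  by apply: prod_le_expr => f /(allP l_fs) /fs_le_q.
rewrite w_prod mem_short_products // leqNgt; apply/negP => /ltnW /qN_lt_s.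
by rewrite ltNge (le_trans le_sw) // w_prod.
Qed.

Lemma sup_eq_max (S : set R) v : S v -> ubound S v -> sup S = v.
Proof.
move=> Sv ub_v; apply/le_anti/andP; split; first by apply: ge_sup => //; exists v.
by apply: sup_upper_bound => //; split; exists v.
Qed.

End Products.

Lemma tuple_of_uniq_vars (VAR : eqType) (D : Type) n (d : n.-tuple D) :
  (exists g : nat -> VAR, injective g) -> inhabited D ->
  exists (beta : VAR -> D) (y : n.-tuple VAR), uniq y /\ d = map_tuple beta y.
Proof.
case=> g g_inj [d0].
have size_y : size (map g (iota 0 n)) == n by rewrite size_map size_iota.
pose y := Tuple size_y.
have y_uniq : uniq y by rewrite /= map_inj_uniq // iota_uniq.
exists (fun v => nth d0 d (index v y)), y; split => //.
apply: val_inj; apply: (@eq_from_nth _ d0); first by rewrite /= size_map !size_tuple.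
move=> j; rewrite size_tuple => lt_jn.
by rewrite /= (nth_map (g 0)) ?size_tuple // index_uniq ?size_tuple.
Qed.

Lemma In_map_mem (T : Type) (U : eqType) (f : T -> U) x s :
  List.In x s -> f x \in map f s.
Proof. by elim: s => //= y s IH [->|/IH]; rewrite inE ?eqxx // => ->; rewrite orbT. Qed.

Definition proper_factors (R : realType) (VAR : eqType) (Constr Rel : Type)
    (arity : Rel -> nat) (P : seq (qclause R VAR Constr arity)) : seq R :=
  [seq f <- map (@cl_factor _ _ _ _ _) P | 0 <= f < 1].

Unset Implicit Arguments.

Section ChainValues.
Variables (R : realType) (VAR : eqType) (Constr : Type)
  (crename : (VAR -> VAR) -> Constr -> Constr) (D : Type)
  (sem : Constr -> (VAR -> D) -> Prop) (Rel : Type) (arity : Rel -> nat)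
  (P : seq (qclause R VAR Constr arity)) (A : nat -> interp R arity D).
Hypotheses (VAR_inf : exists g : nat -> VAR, injective g) (D_inhabited : inhabited D)
  (HP : qdc_spec P) (A_chain : is_chain P crename sem A).

Lemma chain_values_products i r d : products (proper_factors P) (A i r d).
Proof.
elim: i r d => [|i IH] r d;
  have [beta [y [y_uniq ->]]] := tuple_of_uniq_vars d VAR_inf D_inhabited.
  by left; apply: A_chain.1.
have [[_ ->]|[[c [rho [Pc [_ [_ _ _ ->]]]]] _]] := A_chain.2 i r beta y y_uniq.
  by left.
have [_ /andP[f_gt0 f_le1] _] := HP c Pc.
have body_prod : products (proper_factors P)
    (body_val (A i) beta (cl_body (rename_clause crename rho c))).
  exact: products_lmin.
have [f_lt1|f_ge1] := ltP (cl_factor c) 1.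
  apply: (productsM (f := cl_factor c) body_prod).
  by rewrite mem_filter f_lt1 ltW // In_map_mem.
by rewrite /= (@le_anti _ _ (cl_factor c) 1) ?f_le1 // mul1r.
Qed.

End ChainValues.

Theorem lemma1
  (R : realType)
  (* the constraint language L *)
  (VAR : eqType) (Constr : Type) (V : Constr -> seq VAR)
  (crename : (VAR -> VAR) -> Constr -> Constr)
  (HVARinf : exists g : nat -> VAR, injective g)
  (* the L-interpretation I: domain D, assignments VAR -> D, solutions sem *)
  (D : Type) (HD : inhabited D) (sem : Constr -> (VAR -> D) -> Prop)
  (Hloc : forall phi (alpha beta : VAR -> D),
      sem phi alpha -> {in V phi, alpha =1 beta} -> sem phi beta)
  (HrenV : forall rho phi, renaming rho -> V (crename rho phi) =i map rho (V phi))
  (Hrensem : forall rho phi (alpha : VAR -> D), renaming rho ->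
      sem (crename rho phi) alpha <-> sem phi (alpha \o rho))
  (* the relation symbols of R(L) *)
  (Rel : Type) (arity : Rel -> nat)
  (* the specification P_F *)
  (P : seq (qclause R VAR Constr arity)) (HP : qdc_spec P)
  (* the chain *)
  (A : nat -> interp R arity D)
  (HA : forall i, fuzzy_interp (A i))
  (Hchain : is_chain P crename sem A) :
  forall (r : Rel) (alpha : VAR -> D) (x : (arity r).-tuple VAR),
  exists m : nat,
    union_interp A r (map_tuple alpha x) = A m r (map_tuple alpha x).
Proof.
move=> r alpha x; set d := map_tuple alpha x.
have [_ [m _ <-] max_m] : exists2 v, [set A i r d | i in [set: nat]] v &
    ubound [set A i r d | i in [set: nat]] v.
  apply: (@products_has_max _ (proper_factors P)).
  - by move=> f; rewrite mem_filter => /andP[].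
  - by exists (A 0%N r d), 0%N.
  - by move=> _ [i _ <-]; exact: chain_values_products HVARinf HD HP Hchain i r d.
by exists m; apply: sup_eq_max => //; exists m.
Qed.
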